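(* Let $n\ge 1$ and consider the $n$-qubit bit flip (repetition) code, with encoded states $\overline{|0\rangle}=|0\rangle^{\otimes n}$ and $\overline{|1\rangle}=|1\rangle^{\otimes n}$. Suppose each of the $n$ physical qubits independently suffers the Pauli error $\sigma\in\{I,X,Y,Z\}$ with probability $p_\sigma$, where $p_I+p_X+p_Y+p_Z=1$. Put $q_X=p_X+p_Y$ and, for $0\le k\le n$, $$a_k=\binom{n}{k}q_X^k(1-q_X)^{n-k},\qquad b_k=\binom{n}{k}(p_X-p_Y)^k(p_I-p_Z)^{n-k}.$$ For $0\le k<\frac n2$, the probability $l_\sigma(k)$ of measuring a syndrome corresponding to an error of distance $k$ and having resulting logical error $\sigma$ is $$l_I(k)=\frac{a_k+b_k}{2},\quad l_X(k)=\frac{a_{n-k}+b_{n-k}}{2},\quad l_Y(k)=\frac{a_{n-k}-b_{n-k}}{2},\quad l_Z(k)=\frac{a_k-b_k}{2}.$$ If $n$ is even, then for $k=\frac n2$, $$l_I(\tfrac n2)=l_X(\tfrac n2)=\frac{a_{n/2}+b_{n/2}}{4},\qquad l_Y(\tfrac n2)=l_Z(\tfrac n2)=\frac{a_{n/2}-b_{n/2}}{4}.$$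
   Context: An $n$-qubit Pauli error $E$ (tensor product of single-qubit Paulis, up to phase) has a bit-flip pattern $s\in\{0,1\}^n$, where $s_i=1$ iff the $i$-th factor is $X$ or $Y$. Syndrome measurement of the bit flip code (stabilizers $Z_iZ_{i+1}$) reveals $s$ up to complementation, i.e. the unordered pair $\{s,\bar s\}$. Such a syndrome is said to correspond to an error of distance $k=\min(|s|,n-|s|)$, where $|s|$ is the Hamming weight. Recovery applies $X$ on the qubits of the minimum-weight representative of $\{s,\bar s\}$ (when $|s|=n/2$, a fixed choice of one of the two representatives is made). After recovery the residual operator equals, up to phase and stabilizers, a logical operator $\overline{X}^{\alpha}\overline{Z}^{\beta}$, where $\alpha=1$ iff the applied representative differs from $s$ (i.e. a logical bit flip occurred) and $\beta=1$ iff the total number of phase-type components of the residual is odd (a logical phase flip). The logical error $\sigma$ is $I,X,Z,Y$ for $(\alpha,\beta)=(0,0),(1,0),(0,1),(1,1)$ respectively. *)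

From mathcomp Require Import all_boot all_order all_algebra.
Set Implicit Arguments. Unset Strict Implicit. Unset Printing Implicit Defensive.
Import Order.TTheory GRing.Theory Num.Theory.

(* Single-qubit Paulis up to phase, in symplectic form (x-part, z-part):
   I = (false,false), X = (true,false), Y = (true,true), Z = (false,true). *)
Definition Pauli := (bool * bool)%type.
Definition PI : Pauli := (false, false).
Definition PX : Pauli := (true, false).
Definition PY : Pauli := (true, true).
Definition PZ : Pauli := (false, true).

(* Logical errors X^alpha Z^beta are encoded as (alpha, beta), so the
   logical error sigma in {I,X,Y,Z} uses the same encoding as above. *)

Section Code.
Variable n : nat.

Definition error := {ffun 'I_n -> Pauli}.

Definition flips (E : error) : {set 'I_n} := [set i | (E i).1].

Definition dist (E : error) : nat := minn #|flips E| (n - #|flips E|).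

(* Recovery: the minimum-weight representative of {s, ~s};
   when |s| = n/2 the fixed choice [tie s] is used. *)
Definition recovery (tie : {set 'I_n} -> {set 'I_n}) (s : {set 'I_n}) :
  {set 'I_n} :=
  if (#|s|).*2 < n then s
  else if n < (#|s|).*2 then ~: s
  else tie s.

(* a valid tie-breaking rule: picks one of the two representatives,
   depending only on the syndrome (the unordered pair {s, ~s}) *)
Definition valid_tie (tie : {set 'I_n} -> {set 'I_n}) : Prop :=
  forall s : {set 'I_n}, (#|s|).*2 = n ->
    (tie s = s \/ tie s = ~: s) /\ tie (~: s) = tie s.

(* residual operator E * X^{r} (up to phase) *)
Definition residual (tie : {set 'I_n} -> {set 'I_n}) (E : error) : error :=
  [ffun i => (((E i).1 (+) (i \in recovery tie (flips E))), (E i).2)].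

Definition logical (tie : {set 'I_n} -> {set 'I_n}) (E : error) : Pauli :=
  (recovery tie (flips E) != flips E,
   odd #|[set i | (residual tie E i).2]|).

Variable R : realFieldType.

Definition err_prob (p : Pauli -> R) (E : error) : R := \prod_i p (E i).

Definition lprob (tie : {set 'I_n} -> {set 'I_n}) (p : Pauli -> R)
  (sigma : Pauli) (k : nat) : R :=
  \sum_(E : error | (dist E == k) && (logical tie E == sigma)) err_prob p E.

Local Open Scope ring_scope.

Definition qX (p : Pauli -> R) : R := p PX + p PY.

Definition acoef (p : Pauli -> R) (k : nat) : R :=
  'C(n, k)%:R * qX p ^+ k * (1 - qX p) ^+ (n - k).

Definition bcoef (p : Pauli -> R) (k : nat) : R :=
  'C(n, k)%:R * (p PX - p PY) ^+ k * (p PI - p PZ) ^+ (n - k).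

End Code.

From mathcomp Require Import all_boot all_order all_algebra.
From mathcomp Require Import ring lra zify.
Set Implicit Arguments. Unset Strict Implicit. Unset Printing Implicit Defensive.
Import Order.TTheory GRing.Theory Num.Theory.
Local Open Scope ring_scope.

(* Group the errors by their bit-flip pattern S. The channel is i.i.d., so the
   errors with pattern S have total probability q_X^|S| (1 - q_X)^(n - |S|),
   and weighting each of them by (-1)^(number of Z-components) turns every
   qubit factor p_X + p_Y (resp. p_I + p_Z) into p_X - p_Y (resp. p_I - p_Z).
   Half the sum and half the difference of these two quantities are the
   probabilities that the phase parity is even or odd. What remains is to
   count the patterns S leading to distance k and to a logical bit flip:
   they are the sets of size k (no flip) or n - k (flip) when 2k < n; when
   2k = n they are the sets of size k, split evenly between the two outcomes
   because complementation preserves the tie-breaking choice but exchanges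
   the outcomes. *)

Lemma sum_ffun_preimset (I T : finType) (R : comNzRingType) (key : pred T)
    (u : I -> T -> R) (S : {set I}) :
  \sum_(f : {ffun I -> T} | [set i | key (f i)] == S) \prod_i u i (f i) =
  \prod_i \sum_(t | key t == (i \in S)) u i t.
Proof.
under eq_bigr do rewrite big_mkcond.
rewrite bigA_distr_bigA /= [LHS]big_mkcond; apply: eq_bigr => f _ /=.
case: eqP => [<- | neqS].
  by apply: eq_bigr => i _; rewrite inE eqxx.
have [i /negbTE keyN | keyE] := pickP (fun i => key (f i) != (i \in S)).
  by rewrite (bigD1 i) //= keyN mul0r.
by case: neqS; apply/setP => i; rewrite inE; apply/eqP/negbFE/keyE.
Qed.

Lemma sum_pauli_fst (R : comNzRingType) (u : Pauli -> R) (b : bool) :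
  \sum_(P : Pauli | P.1 == b) u P = u (b, false) + u (b, true).
Proof.
rewrite big_mkcond.
rewrite (eq_bigr (fun P : Pauli => if P.1 == b then u (P.1, P.2) else 0));
  last by case.
rewrite -(pair_bigA _ (fun x y => if x == b then u (x, y) else 0)) /= !big_bool.
by case: b; rewrite /= ?addr0 ?add0r addrC.
Qed.

Lemma prodr_if_in (I : finType) (R : comNzRingType) (S : {set I}) (x y : R) :
  \prod_i (if i \in S then x else y) = x ^+ #|S| * y ^+ #|~: S|.
Proof.
rewrite (bigID (mem S)) /= -!prodr_const.
congr (_ * _); apply: eq_big => [i | i]; rewrite ?inE //.
- by move=> ->.
- by move=> /negbTE ->.
Qed.

Lemma prodr_sign_card (I : finType) (R : comNzRingType) (b : I -> bool) :
  \prod_i (-1) ^+ b i = (-1) ^+ #|[set i | b i]| :> R.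
Proof.
have := @prodr_if_in _ _ [set i | b i] (-1 : R) 1%R; rewrite expr1n mulr1 => <-.
by apply: eq_bigr => i _; rewrite inE; case: (b i).
Qed.

Lemma setC_neq (T : finType) (A : {set T}) : (0 < #|A|)%N -> ~: A != A.
Proof.
move=> A_gt0; apply/eqP => CA.
by move: A_gt0; have := setICr A; rewrite CA setIid => ->; rewrite cards0.
Qed.

Section SyndromeCounting.
Variables (n : nat) (tie : {set 'I_n} -> {set 'I_n}).

Lemma max_card_ord (A : {set 'I_n}) : (#|A| <= n)%N.
Proof. by rewrite -[n in (_ <= n)%N]card_ord max_card. Qed.

Lemma cardsC_ord (A : {set 'I_n}) : #|~: A| = (n - #|A|)%N.
Proof. by rewrite cardsCs setCK card_ord. Qed.

Lemma syndrome_below_half (A : {set 'I_n}) k (b : bool) : (k.*2 < n)%N ->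
  (minn #|A| (n - #|A|) == k) && ((recovery tie A != A) == b) =
  (#|A| == if b then n - k else k)%N.
Proof.
move=> k_lt; rewrite -muln2 in k_lt.
have CA : (n < #|A| * 2)%N -> ~: A != A by move=> ?; apply: setC_neq; lia.
rewrite /recovery -!muln2; move: #|A| (max_card_ord A) CA => c c_le CA.
case: ltngtP => c_cmp.
- case: b; rewrite /= ?eqxx ?andbT ?andbF.
  + by apply/esym/negbTE/eqP; lia.
  + by apply/eqP/eqP; lia.
- case: b; rewrite CA //= ?andbT ?andbF.
  + by apply/eqP/eqP; lia.
  + by apply/esym/negbTE/eqP; lia.
- rewrite (_ : minn _ _ == k = false) ?andFb; last by apply/negbTE/eqP; lia.
  by case: b; apply/esym/negbTE/eqP; lia.
Qed.

Lemma syndrome_at_half (A : {set 'I_n}) h (b : bool) : h.*2 = n ->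
  (minn #|A| (n - #|A|) == h) && ((recovery tie A != A) == b) =
  (#|A| == h) && ((tie A != A) == b).
Proof.
move=> hn; have A_le := max_card_ord A.
have [A_h | A_h] := eqVneq #|A| h.
  by rewrite /recovery A_h hn ltnn (_ : minn h (n - h) == h) //; apply/eqP; lia.
by rewrite (_ : minn _ _ == h = false) //; apply/negbTE/eqP; lia.
Qed.

Lemma sum_card_eq (R : comNzRingType) h (F : nat -> R) :
  \sum_(A : {set 'I_n}) (#|A| == h)%:R * F #|A| = 'C(n, h)%:R * F h.
Proof.
rewrite (eq_bigr (fun A : {set 'I_n} => (#|A| == h)%:R * F h)); last first.
  by move=> A _; case: eqP => [-> | _]; rewrite ?mul0r.
rewrite -mulr_suml -[n in 'C(n, h)]card_ord -card_draws -sum1_card natr_sum.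
congr (_ * _); rewrite [RHS]big_mkcond; apply: eq_bigr => A _.
by rewrite inE; case: (_ == _).
Qed.

Hypothesis tie_valid : valid_tie tie.

Lemma sum_tie_outcome (R : realFieldType) h (b : bool) :
  (0 < n)%N -> h.*2 = n ->
  \sum_(A : {set 'I_n}) ((#|A| == h) && ((tie A != A) == b))%:R =
  'C(n, h)%:R / 2 :> R.
Proof.
move=> n_gt0 hn.
pose X c := \sum_(A : {set 'I_n}) ((#|A| == h) && ((tie A != A) == c))%:R : R.
have X_sum : X true + X false = 'C(n, h)%:R.
  rewrite -big_split /= -[RHS]mulr1 -(sum_card_eq h (fun=> 1 : R)).
  apply: eq_bigr => A _.
  by case: (#|A| == h); case: (tie A != A); rewrite /= ?addr0 ?add0r ?mulr1.
(* complementation exchanges the two outcomes among the sets of size h *)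
have X_sym : X true = X false.
  rewrite /X [RHS](reindex_inj (@setC_inj _)) /=; apply: eq_bigr => S _.
  rewrite cardsC_ord.
  have [S_h | S_h] := eqVneq #|S| h; last first.
    by rewrite (_ : (n - #|S| == h)%N = false) //; apply/negbTE/eqP; lia.
  have [tieS tieC] := tie_valid (etrans (congr1 double S_h) hn).
  have S_gt0 : (0 < #|S|)%N by lia.
  rewrite S_h (_ : (n - h == h)%N) /=; last by apply/eqP; lia.
  rewrite tieC; case: tieS => ->.
  - by rewrite eqxx /= [S == _]eq_sym (setC_neq S_gt0).
  - by rewrite eqxx (setC_neq S_gt0).
by rewrite -/(X b); case: b; lra.
Qed.

End SyndromeCounting.

Section PauliChannel.
Variables (n : nat) (R : realFieldType) (p : Pauli -> R).
Hypothesis p_sum1 : p PI + p PX + p PY + p PZ = 1.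

Definition zsupp (E : error n) : {set 'I_n} := [set i | (E i).2].

Definition pattern_prob (h : nat) : R := qX p ^+ h * (1 - qX p) ^+ (n - h).

Definition pattern_bias (h : nat) : R :=
  (p PX - p PY) ^+ h * (p PI - p PZ) ^+ (n - h).

Lemma sum_err_prob_flips (S : {set 'I_n}) :
  \sum_(E : error n | flips E == S) err_prob p E = pattern_prob #|S|.
Proof.
rewrite (sum_ffun_preimset fst (fun=> p)) /pattern_prob -cardsC_ord.
rewrite -prodr_if_in; apply: eq_bigr => i _; rewrite sum_pauli_fst /qX.
by case: (i \in S); move: p_sum1; rewrite /PI /PX /PY /PZ /=; lra.
Qed.

Lemma sum_signed_err_prob_flips (S : {set 'I_n}) :
  \sum_(E : error n | flips E == S) err_prob p E * (-1) ^+ #|zsupp E| =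
  pattern_bias #|S|.
Proof.
under eq_bigr do rewrite -prodr_sign_card -big_split /=.
rewrite (sum_ffun_preimset fst (fun _ P => p P * (-1) ^+ P.2)) /pattern_bias.
rewrite -cardsC_ord -prodr_if_in; apply: eq_bigr => i _.
by rewrite sum_pauli_fst; case: (i \in S); rewrite /= expr0 expr1; ring.
Qed.

(* the indicator of [odd m == b] is (1 + (-1)^b (-1)^m) / 2 *)
Lemma sum_err_prob_flips_parity (S : {set 'I_n}) (b : bool) :
  \sum_(E : error n | (flips E == S) && (odd #|zsupp E| == b)) err_prob p E =
  (pattern_prob #|S| + (-1) ^+ b * pattern_bias #|S|) / 2.
Proof.
rewrite big_mkcondr /= -sum_err_prob_flips -sum_signed_err_prob_flips.
rewrite mulr_sumr -big_split /= mulr_suml; apply: eq_bigr => E _.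
rewrite -[(-1) ^+ #|zsupp E|]signr_odd; case: b; case: (odd _).
all: by rewrite /= ?expr0 ?expr1; field.
Qed.

Variable tie : {set 'I_n} -> {set 'I_n}.

Definition logical_weight (sigma : Pauli) (h : nat) : R :=
  (pattern_prob h + (-1) ^+ sigma.2 * pattern_bias h) / 2.

Lemma lprob_by_flips (sigma : Pauli) k :
  lprob tie p sigma k = \sum_(S : {set 'I_n})
    ((minn #|S| (n - #|S|) == k) && ((recovery tie S != S) == sigma.1))%:R *
    logical_weight sigma #|S|.
Proof.
rewrite /lprob (partition_big (@flips n) xpredT) //=; apply: eq_bigr => S _.
have resZ E : [set i | (residual tie E i).2] = zsupp E.
  by apply/setP => i; rewrite !inE ffunE.
case: sigma => sx sz /=.
case: (boolP (_ && _)) => S_ok; rewrite /= ?mul1r ?mul0r.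
  rewrite /logical_weight -sum_err_prob_flips_parity; apply: eq_bigl => E.
  case: (eqVneq (flips E) S) => [ES | _]; last by rewrite !andbF.
  by rewrite /dist /logical ES resZ xpair_eqE andbA S_ok andbT.
apply: big1 => E /andP[/andP[/eqP dist_k /eqP logE] /eqP ES]; move: S_ok.
by rewrite -ES -[minn _ _]/(dist E) dist_k -[sx]/((sx, sz).1) -logE /= !eqxx.
Qed.

Lemma binomial_logical_weight (sigma : Pauli) h :
  'C(n, h)%:R * logical_weight sigma h =
  (acoef n p h + (-1) ^+ sigma.2 * bcoef n p h) / 2.
Proof.
by rewrite /logical_weight /pattern_prob /pattern_bias /acoef /bcoef; ring.
Qed.

Lemma lprob_below_half (sigma : Pauli) k : (k.*2 < n)%N ->
  let m := if sigma.1 then (n - k)%N else k in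
  lprob tie p sigma k = (acoef n p m + (-1) ^+ sigma.2 * bcoef n p m) / 2.
Proof.
move=> k_lt m; rewrite lprob_by_flips -binomial_logical_weight -sum_card_eq.
by apply: eq_bigr => S _; rewrite syndrome_below_half.
Qed.

Lemma lprob_at_half (sigma : Pauli) h :
  valid_tie tie -> (0 < n)%N -> h.*2 = n ->
  lprob tie p sigma h = (acoef n p h + (-1) ^+ sigma.2 * bcoef n p h) / 4.
Proof.
move=> tie_valid n_gt0 hn; rewrite lprob_by_flips.
rewrite (eq_bigr (fun S : {set 'I_n} =>
  ((#|S| == h) && ((tie S != S) == sigma.1))%:R * logical_weight sigma h)).
  rewrite -mulr_suml sum_tie_outcome // mulrAC binomial_logical_weight.
  by field.
move=> S _; rewrite syndrome_at_half //.
by have [-> // | _] := eqVneq #|S| h; rewrite /= !mul0r.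
Qed.

End PauliChannel.

Theorem lemma1 (R : realFieldType) (n : nat) (hn : (1 <= n)%N)
  (p : Pauli -> R) (hp0 : forall s, 0 <= p s)
  (hp1 : p PI + p PX + p PY + p PZ = 1)
  (tie : {set 'I_n} -> {set 'I_n}) (htie : valid_tie tie) :
  (forall k : nat, (k.*2 < n)%N ->
     [/\ lprob tie p PI k = (acoef n p k + bcoef n p k) / 2,
         lprob tie p PX k = (acoef n p (n - k) + bcoef n p (n - k)) / 2,
         lprob tie p PY k = (acoef n p (n - k) - bcoef n p (n - k)) / 2 &
         lprob tie p PZ k = (acoef n p k - bcoef n p k) / 2]) /\
  (~~ odd n ->
     [/\ lprob tie p PI n./2 = (acoef n p n./2 + bcoef n p n./2) / 4,
         lprob tie p PX n./2 = (acoef n p n./2 + bcoef n p n./2) / 4,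
         lprob tie p PY n./2 = (acoef n p n./2 - bcoef n p n./2) / 4 &
         lprob tie p PZ n./2 = (acoef n p n./2 - bcoef n p n./2) / 4]).
Proof.
split=> [k k_lt | n_even].
  by rewrite !(lprob_below_half hp1) //= expr0 expr1 !mul1r !mulN1r.
have half_n : n./2.*2 = n by rewrite -[RHS]odd_double_half (negbTE n_even).
by rewrite !(lprob_at_half hp1) //= expr0 expr1 !mul1r !mulN1r.
Qed.
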